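(* Let $\mathcal{A}'$ be the localization of $\mathcal{A}=W(2n|n)$ at the multiplicative set $D$ generated by $\{H+k : k\in\mathbb{Z}\}$, let $I'=\mathcal{A}'X+\mathcal{A}'E$, and let $M'=\mathcal{A}'/I'$ as a left $\mathcal{A}'$-module. Then $M'$ is locally $\mathfrak{g}_+$-finite, i.e. for every $v\in M'$ the subspace $U(\mathfrak{g}_+)v$ (where $U(\mathfrak{g}_+)$ is the subalgebra of $\mathcal{A}'$ generated by $X$ and $E$) is finite-dimensional.
   Context: Fix $n\ge1$ and an invertible complex matrix $\eta=(\eta^{ij})$ with $\eta^{ij}=\eta^{ji}$ and inverse $(\eta_{ij})$. $W(2n|n)$ is the associative superalgebra generated by even $x^1,\dots,x^n,\partial_1,\dots,\partial_n$ and odd $\gamma^1,\dots,\gamma^n$ with relations $x^ix^j=x^jx^i$, $\partial_i\partial_j=\partial_j\partial_i$, $\partial_ix^j-x^j\partial_i=\delta_i^j$, $\gamma^i$ commuting with all $x^j,\partial_j$, and $\gamma^i\gamma^j+\gamma^j\gamma^i=2\eta^{ij}$. Repeated indices are summed; $x_i=\eta_{ij}x^j$, $\partial^i=\eta^{ij}\partial_j$. Set $X=\frac{\sqrt{-1}}{\sqrt2}\gamma^i\partial_i$, $H=-\frac12(\partial_ix^i+x^i\partial_i)$, $E=-\frac12\partial^i\partial_i=X^2$, and $\mathfrak{g}_+=\mathbb{C}X\oplus\mathbb{C}E$. *)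

From mathcomp Require Import all_boot all_algebra.
From mathcomp Require Import complex Rstruct.
Set Implicit Arguments. Unset Strict Implicit. Unset Printing Implicit Defensive.
Import GRing.Theory Num.Theory.
Local Open Scope ring_scope.

Definition CC : numClosedFieldType := Rdefinitions.R[i].

Section WeylClifford.
Variable n : nat.
Variable eta : 'M[CC]_n.
Variable A : algType CC.
Variables (x d g : 'I_n -> A).

Definition W_relations : Prop :=
  [/\ forall i j, x i * x j = x j * x i,
      forall i j, d i * d j = d j * d i,
      forall i j, d i * x j - x j * d i = (i == j)%:R,
      forall i j, g i * x j = x j * g i /\ g i * d j = d j * g i
    & forall i j, g i * g j + g j * g i = (2 * eta i j)%:A].

Definition Hop : A := (- 2^-1 : CC) *: \sum_(i < n) (d i * x i + x i * d i).
Definition Xop : A := ('i / sqrtC 2 : CC) *: \sum_(i < n) g i * d i.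
Definition Eop : A :=
  (- 2^-1 : CC) *: \sum_(i < n) (\sum_(j < n) eta i j *: d j) * d i.

Definition D_invertible : Prop :=
  forall k : int, exists y : A,
    y * (Hop + k%:~R) = 1 /\ (Hop + k%:~R) * y = 1.
End WeylClifford.

Definition is_alg_hom (A B : algType CC) (f : A -> B) : Prop :=
  [/\ forall a b, f (a + b) = f a + f b,
      forall a b, f (a * b) = f a * f b,
      forall (c : CC) a, f (c *: a) = c *: f a
    & f 1 = 1].

(* (A, x, d, g) is the localization A' of W(2n|n) at the multiplicative set D
   generated by {H + k : k in Z}: it is given by generators satisfying the
   relations of W(2n|n) in which every H + k is invertible, and it is initial
   (universal) among all such C-algebras. *)
Definition is_localized_W (n : nat) (eta : 'M[CC]_n) (A : algType CC)
    (x d g : 'I_n -> A) : Prop :=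
  [/\ W_relations eta x d g,
      D_invertible x d
    & forall (B : algType CC) (xb db gb : 'I_n -> B),
        W_relations eta xb db gb -> D_invertible xb db ->
        (exists f : A -> B, is_alg_hom f /\
           forall i, [/\ f (x i) = xb i, f (d i) = db i & f (g i) = gb i])
        /\ (forall f1 f2 : A -> B, is_alg_hom f1 -> is_alg_hom f2 ->
              (forall i, [/\ f1 (x i) = f2 (x i), f1 (d i) = f2 (d i)
                           & f1 (g i) = f2 (g i)]) ->
              forall a, f1 a = f2 a)].

Inductive in_subalg2 (A : algType CC) (X E : A) : A -> Prop :=
  | sub_one : in_subalg2 X E 1
  | sub_X : in_subalg2 X E X
  | sub_E : in_subalg2 X E E
  | sub_add u v : in_subalg2 X E u -> in_subalg2 X E v -> in_subalg2 X E (u + v)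
  | sub_scale (c : CC) u : in_subalg2 X E u -> in_subalg2 X E (c *: u)
  | sub_mul u v : in_subalg2 X E u -> in_subalg2 X E v -> in_subalg2 X E (u * v).

Definition in_left_ideal2 (A : algType CC) (X E a : A) : Prop :=
  exists p q : A, a = p * X + q * E.

(* The left A-module M = A / (A X + A E) is locally finite for the subalgebra
   generated by X and E: for every v = a + I' in M, U v is contained in the
   image of a finite-dimensional subspace span(bs) of A, i.e. U v is
   finite-dimensional. *)
Definition locally_finite_quotient (A : algType CC) (X E : A) : Prop :=
  forall a : A, exists bs : seq A,
    forall u, in_subalg2 X E u ->
      exists cs : 'I_(size bs) -> CC,
        in_left_ideal2 X E (u * a - \sum_(j < size bs) cs j *: bs`_j).

From HB Require Import structures.
From mathcomp Require Import all_boot all_algebra.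
From mathcomp Require Import complex Rstruct.
From mathcomp Require Import boolp.

(* Since X^2 = E, the class of U(g_+) a in M' is spanned by the classes of the
   E^j a and X E^j a, and these vanish for large j as soon as E^N a lies in
   A'E.  Call a absorbing if for every m some E^N a lies in A'E^m.  Absorbing
   elements form a subalgebra containing d_i and gamma^i (which commute with
   E), x^i (since [E, x^i] = -d^i commutes with E) and the inverses of H + k
   (since E (H + k) = (H + k - 2) E).  By the universal property of the
   localization this subalgebra is all of A'. *)
Set Implicit Arguments. Unset Strict Implicit. Unset Printing Implicit Defensive.
Import GRing.Theory Num.Theory.
Local Open Scope ring_scope.

Lemma sum_mulrn_eq (V : nmodType) m (F : 'I_m -> V) (j : 'I_m) :
  \sum_(k < m) F k *+ (k == j) = F j.
Proof. by rewrite (bigD1 j) //= eqxx big1 ?addr0 // => k /negbTE ->. Qed.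

Lemma commrZ (R : pzRingType) (A : algType R) (a b : A) (c : R) :
  GRing.comm a b -> GRing.comm a (c *: b).
Proof. by rewrite /GRing.comm -scalerAl -scalerAr => ->. Qed.

Lemma scale_half_double (V : lmodType CC) (v : V) : 2^-1 *: (v + v) = v.
Proof. by rewrite -{1 2}[v]scale1r -scalerDl scalerA mulVf ?scale1r ?pnatr_eq0. Qed.

Section SubalgebraType.
Variables (R : pzRingType) (A : algType R) (S : subalgClosed A).

Record subalg := Subalg { subalg_val : A; subalg_valP : subalg_val \in S }.
HB.instance Definition _ := [isSub for subalg_val].
HB.instance Definition _ := [Choice of subalg by <:].
HB.instance Definition _ := [SubChoice_isSubLalgebra of subalg by <:].
HB.instance Definition _ := [SubLalgebra_isSubAlgebra of subalg by <:].

End SubalgebraType.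

Section AbsorbsPowers.
Variables (R : pzRingType) (A : algType R) (E : A).

Definition absorbs_powers (a : A) := forall m, exists N p, E ^+ N * a = p * E ^+ m.

Lemma absorbs_powers_comm z : GRing.comm z E -> absorbs_powers z.
Proof. by move=> zE m; exists m, z; rewrite (commrX m zE). Qed.

Lemma absorbs_powers1 : absorbs_powers 1.
Proof. by apply: absorbs_powers_comm; rewrite /GRing.comm mulr1 mul1r. Qed.

Lemma absorbs_powersD a b :
  absorbs_powers a -> absorbs_powers b -> absorbs_powers (a + b).
Proof.
move=> ha hb m; have [Na [pa Ea]] := ha m; have [Nb [pb Eb]] := hb m.
exists (Na + Nb)%N, (E ^+ Nb * pa + E ^+ Na * pb).
rewrite mulrDr mulrDl; congr (_ + _).
  by rewrite addnC exprD -mulrA Ea mulrA.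
by rewrite exprD -mulrA Eb mulrA.
Qed.

Lemma absorbs_powersZ c a : absorbs_powers a -> absorbs_powers (c *: a).
Proof.
by move=> ha m; have [N [p Ep]] := ha m; exists N, (c *: p); rewrite -scalerAr Ep scalerAl.
Qed.

Lemma absorbs_powersM a b :
  absorbs_powers a -> absorbs_powers b -> absorbs_powers (a * b).
Proof.
move=> ha hb m; have [Nb [pb Eb]] := hb m; have [Na [pa Ea]] := ha Nb.
by exists Na, (pa * pb); rewrite mulrA Ea -mulrA Eb mulrA.
Qed.

(* Witness: E^(m+1) z = (z E - (m+1) c) E^m. *)
Lemma absorbs_powers_shift z c :
  E * z = z * E - c -> GRing.comm E c -> absorbs_powers z.
Proof.
move=> Ez Ec m; exists m.+1, (z * E - c *+ m.+1).
elim: m => [|m IH]; first by rewrite expr1 expr0 mulr1 mulr1n.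
rewrite exprS -mulrA IH mulrA mulrBr mulrA Ez mulrnAr Ec [E ^+ m.+1]exprS mulrA.
by congr (_ * _); rewrite !mulrBl mulrnAl -addrA -opprD -mulrS.
Qed.

Variable H : A.
Hypothesis EH : E * H = (H - 2%:R) * E.
Hypothesis H_shift_invertible : forall k : int, exists y : A,
  y * (H + k%:~R) = 1 /\ (H + k%:~R) * y = 1.

Lemma E_Hshift (k : int) : E * (H + k%:~R) = (H + (k - 2)%:~R) * E.
Proof.
rewrite mulrDr EH mulrzr -mulrzl -mulrDl intrB addrAC -addrA.
by congr ((H + (_ - _)) * E).
Qed.

Lemma absorbs_powers_inv (k : int) y : (H + k%:~R) * y = 1 -> absorbs_powers y.
Proof.
move=> Hy m; exists m; elim: m k y Hy => [|m IH] k y Hy.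
  by exists y; rewrite expr0 mul1r mulr1.
have [z [zH Hz]] := H_shift_invertible (k - 2).
have Ey : E * y = z * E.
  by rewrite -[z * E]mulr1 -Hy !mulrA -[z * E * _]mulrA E_Hshift mulrA zH mul1r.
have [p Ep] := IH _ _ Hz.
by exists p; rewrite exprSr -mulrA Ey mulrA Ep -mulrA -exprSr.
Qed.

Definition absorbs_powersb : {pred A} := fun a => `[< absorbs_powers a >].

Lemma absorbs_powersP a : reflect (absorbs_powers a) (a \in absorbs_powersb).
Proof. by rewrite unfold_in; apply: asboolP. Qed.

Lemma absorbs_powers_subalg_closed : GRing.subalg_closed absorbs_powersb.
Proof.
split; first exact/absorbs_powersP/absorbs_powers1.
- move=> c u v /absorbs_powersP hu /absorbs_powersP hv; apply/absorbs_powersP.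
  exact/absorbs_powersD/hv/absorbs_powersZ.
- move=> u v /absorbs_powersP hu /absorbs_powersP hv; apply/absorbs_powersP.
  exact: absorbs_powersM.
Qed.

HB.instance Definition _ :=
  GRing.isSubalgClosed.Build R A absorbs_powersb absorbs_powers_subalg_closed.

End AbsorbsPowers.

Section SpanModuloIdeal.
Variables (A : algType CC) (X E : A).
Local Notation I := (in_left_ideal2 X E).

Lemma left_ideal0 : I 0.
Proof. by exists 0, 0; rewrite !mul0r addr0. Qed.

Lemma left_idealD u v : I u -> I v -> I (u + v).
Proof.
move=> [p [q ->]] [p' [q' ->]]; exists (p + p'), (q + q').
by rewrite !mulrDl addrACA.
Qed.

Lemma left_idealZ c u : I u -> I (c *: u).
Proof. by move=> [p [q ->]]; exists (c *: p), (c *: q); rewrite scalerDr !scalerAl. Qed.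

Lemma left_idealMl r u : I u -> I (r * u).
Proof. by move=> [p [q ->]]; exists (r * p), (r * q); rewrite mulrDr !mulrA. Qed.

Lemma left_ideal_mulE p : I (p * E).
Proof. by exists 0, p; rewrite mul0r add0r. Qed.

Variable bs : seq A.

Definition span_mod v :=
  exists cs : 'I_(size bs) -> CC, I (v - \sum_(j < size bs) cs j *: bs`_j).

Lemma span_mod_ideal v : I v -> span_mod v.
Proof. by move=> Iv; exists (fun=> 0); rewrite big1 ?subr0 // => j _; rewrite scale0r. Qed.

Lemma span_modD u v : span_mod u -> span_mod v -> span_mod (u + v).
Proof.
move=> [cu Iu] [cv Iv]; exists (fun j => cu j + cv j).
under eq_bigr do rewrite scalerDl.
by rewrite big_split opprD addrACA; apply: left_idealD.
Qed.

Lemma span_modZ c v : span_mod v -> span_mod (c *: v).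
Proof.
move=> [cv Iv]; exists (fun j => c * cv j).
under eq_bigr do rewrite -scalerA.
by rewrite -scaler_sumr -scalerBr; apply: left_idealZ.
Qed.

Lemma span_mod_mem w : w \in bs -> span_mod w.
Proof.
move=> bs_w; have w_lt : (index w bs < size bs)%N by rewrite index_mem.
exists (fun k => (k == Ordinal w_lt)%:R).
under eq_bigr do rewrite scaler_nat.
by rewrite sum_mulrn_eq /= nth_index // subrr; apply: left_ideal0.
Qed.

Lemma span_modMl r :
  (forall w, w \in bs -> span_mod (r * w)) -> forall v, span_mod v -> span_mod (r * v).
Proof.
move=> r_bs v [cv Iv].
have -> : r * v = r * (v - \sum_(j < size bs) cv j *: bs`_j)
                  + \sum_(j < size bs) cv j *: (r * bs`_j).
  by rewrite mulrBr mulr_sumr; under eq_bigr do rewrite -scalerAr; rewrite subrK.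
apply/span_modD; first exact/span_mod_ideal/left_idealMl.
apply: (big_ind span_mod) => [|s t|j _]; first exact/span_mod_ideal/left_ideal0.
  exact: span_modD.
by apply/span_modZ/r_bs/mem_nth.
Qed.

Lemma span_mod_subalg :
  (forall w, w \in bs -> span_mod (X * w) /\ span_mod (E * w)) ->
  forall u, in_subalg2 X E u -> forall v, span_mod v -> span_mod (u * v).
Proof.
move=> bs_stable u; elim=> {u} [v|||u1 u2 _ IH1 _ IH2 v|c u _ IH v|u1 u2 _ IH1 _ IH2 v].
- by rewrite mul1r.
- by apply: span_modMl => w /bs_stable[].
- by apply: span_modMl => w /bs_stable[].
- by move=> sv; rewrite mulrDl; apply: span_modD; [apply: IH1 | apply: IH2].
- by move=> sv; rewrite -scalerAl; apply/span_modZ/IH.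
- by move=> sv; rewrite -mulrA; apply/IH1/IH2.
Qed.

End SpanModuloIdeal.

Section LocallyFinite.
Variables (A : algType CC) (X E : A).
Hypothesis X_sqr : X * X = E.

Section Orbit.
Variables (a p : A) (N : nat).
Hypothesis EN_a : E ^+ N * a = p * E.

Definition Epow_orbit :=
  [seq E ^+ j * a | j <- iota 0 N] ++ [seq X * (E ^+ j * a) | j <- iota 0 N].

(* For j >= N, E^j a already lies in the ideal A E. *)
Lemma span_mod_Epow_orbit j :
  span_mod X E Epow_orbit (E ^+ j * a) /\ span_mod X E Epow_orbit (X * (E ^+ j * a)).
Proof.
have [j_lt | N_le] := ltnP j N.
  by split; apply: span_mod_mem; rewrite mem_cat; apply/orP; [left | right];
    apply: map_f; rewrite mem_iota add0n j_lt.
have -> : E ^+ j * a = E ^+ (j - N) * p * E by rewrite -mulrA -EN_a mulrA -exprD subnK.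
by split; apply: span_mod_ideal; rewrite ?mulrA; apply: left_ideal_mulE.
Qed.

Lemma Epow_orbit_stable w : w \in Epow_orbit ->
  span_mod X E Epow_orbit (X * w) /\ span_mod X E Epow_orbit (E * w).
Proof.
have EX : E * X = X * E by rewrite -X_sqr mulrA.
rewrite mem_cat => /orP[] /mapP[j _ ->]; split.
- by case: (span_mod_Epow_orbit j).
- by rewrite mulrA -exprS; case: (span_mod_Epow_orbit j.+1).
- by rewrite mulrA X_sqr mulrA -exprS; case: (span_mod_Epow_orbit j.+1).
- rewrite mulrA EX -mulrA [E * _]mulrA -exprS.
  by case: (span_mod_Epow_orbit j.+1).
Qed.

End Orbit.

Lemma Enilpotent_locally_finite_quotient :
  (forall a, exists N p, E ^+ N * a = p * E) -> locally_finite_quotient X E.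
Proof.
move=> absorbs a; have [N [p EN_a]] := absorbs a.
exists (Epow_orbit a N) => u Uu.
apply: (span_mod_subalg (Epow_orbit_stable EN_a) Uu).
by case: (span_mod_Epow_orbit EN_a 0); rewrite mul1r.
Qed.

End LocallyFinite.

Section WeylCliffordIdentities.
Variables (n : nat) (eta : 'M[CC]_n) (A : algType CC) (x d g : 'I_n -> A).
Hypothesis W : W_relations eta x d g.
Hypothesis eta_sym : eta^T = eta.

Let d_comm i j : GRing.comm (d i) (d j). Proof. by case: W. Qed.

Let d_x i j : d i * x j = x j * d i + (i == j)%:R.
Proof. by case: W => _ _ dx _ _; rewrite -(dx i j) addrC subrK. Qed.

Let g_d i j : GRing.comm (g i) (d j). Proof. by case: W => _ _ _ /(_ i j)[]. Qed.

Definition d_up i := \sum_(k < n) eta i k *: d k.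

Lemma EopE : Eop eta d = (- 2^-1) *: \sum_(i < n) d_up i * d i.
Proof. by []. Qed.

Lemma d_up_x i j : d_up i * x j = x j * d_up i + (eta i j)%:A.
Proof.
rewrite mulr_suml mulr_sumr -(sum_mulrn_eq (fun k => (eta i k)%:A) j) -big_split.
by apply: eq_bigr => k _; rewrite -scalerAl d_x scalerDr scalerAr scalerMnr.
Qed.

Lemma d_d_up i j : GRing.comm (d i) (d_up j).
Proof. by apply: commr_sum => k _; apply: commrZ. Qed.

Lemma d_Eop j : GRing.comm (d j) (Eop eta d).
Proof. by apply/commrZ/commr_sum => i _; apply: commrM (d_d_up j i) (d_comm j i). Qed.

Lemma g_Eop j : GRing.comm (g j) (Eop eta d).
Proof.
apply/commrZ/commr_sum => i _; apply: commrM (g_d j i).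
by apply: commr_sum => k _; apply: commrZ.
Qed.

Lemma Eop_d_up j : GRing.comm (Eop eta d) (d_up j).
Proof. by apply: commr_sum => k _; apply/commrZ/esym/d_Eop. Qed.

Lemma Eop_x j : Eop eta d * x j = x j * Eop eta d - d_up j.
Proof.
have eta_symE i : eta i j = eta j i by rewrite -[in LHS]eta_sym mxE.
have term i : d_up i * d i * x j =
    x j * (d_up i * d i) + (eta j i *: d i + d_up i *+ (i == j)).
  rewrite -mulrA d_x mulrDr mulrA d_up_x mulrDl mulr_algl eta_symE mulr_natr.
  by rewrite addrA -mulrA.
rewrite EopE -scalerAl mulr_suml; under eq_bigr do rewrite term.
rewrite big_split big_split /= sum_mulrn_eq -mulr_sumr scalerDr scalerAr.
rewrite -/(d_up j); congr (_ + _).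
by rewrite scaleNr scale_half_double.
Qed.

Lemma Eop_Hop : Eop eta d * Hop x d = (Hop x d - 2%:R) * Eop eta d.
Proof.
have term i : Eop eta d * (d i * x i + x i * d i) =
    (d i * x i + x i * d i) * Eop eta d - (d_up i * d i + d_up i * d i).
  rewrite mulrDr !mulrA -d_Eop -mulrA Eop_x mulrBr mulrBl mulrA -[x i * _ * d i]mulrA.
  by rewrite -d_Eop mulrA d_d_up addrACA -opprD -mulrDl.
rewrite /Hop -scalerAr mulr_sumr; under eq_bigr do rewrite term.
rewrite sumrB -mulr_suml scalerBr scalerAl -/(Hop x d) big_split scalerDr -EopE.
by rewrite mulrBl mulr_natl mulr2n.
Qed.

(* [Xop] takes d before g, so [Xop g d] is built from the products [d i * g i]. *)
Lemma sum_dg_sqr :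
  (\sum_(i < n) d i * g i) * (\sum_(i < n) d i * g i) = \sum_(i < n) d_up i * d i.
Proof.
have g_anti i j : g i * g j + g j * g i = (2 * eta i j)%:A by case: W.
have expand : (\sum_(i < n) d i * g i) * (\sum_(i < n) d i * g i) =
    \sum_(i < n) \sum_(j < n) g i * g j * (d i * d j).
  rewrite mulr_suml; apply: eq_bigr => i _; rewrite mulr_sumr; apply: eq_bigr => j _.
  by rewrite -(g_d i i) -(g_d j j) !mulrA -[g i * d i * g j]mulrA -g_d !mulrA.
have expand_swap : (\sum_(i < n) d i * g i) * (\sum_(i < n) d i * g i) =
    \sum_(i < n) \sum_(j < n) g j * g i * (d i * d j).
  rewrite expand exchange_big; apply: eq_bigr => i _; apply: eq_bigr => j _.
  by rewrite d_comm.
rewrite -[LHS]scale_half_double -[RHS]scale_half_double; congr (_ *: _).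
rewrite {1}expand expand_swap -!big_split; apply: eq_bigr => i _.
rewrite /d_up mulr_suml -!big_split; apply: eq_bigr => j _ /=.
by rewrite -mulrDl g_anti mulr_algl -scalerAl (d_comm j i) -scalerDl mulr_natl mulr2n.
Qed.

Lemma Xop_sqr : Xop g d * Xop g d = Eop eta d.
Proof.
have coef : ('i / sqrtC 2 : CC) * ('i / sqrtC 2) = - 2^-1.
  by rewrite mulrACA -expr2 sqrCi -invfM -expr2 sqrtCK mulN1r.
by rewrite /Xop -scalerAl -scalerAr scalerA coef sum_dg_sqr.
Qed.

End WeylCliffordIdentities.

Lemma alg_hom_Hop (B C : algType CC) (f : B -> C) n (xb db : 'I_n -> B) :
  is_alg_hom f -> f (Hop xb db) = Hop (f \o xb) (f \o db).
Proof.
move=> [fD fM fZ _]; have f0 : f 0 = 0 by apply: (addrI (f 0)); rewrite -fD !addr0.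
by rewrite /Hop fZ (big_morph f fD f0); under eq_bigr do rewrite fD !fM.
Qed.

Lemma alg_hom_comp (B C D : algType CC) (f : B -> C) (h : C -> D) :
  is_alg_hom f -> is_alg_hom h -> is_alg_hom (h \o f).
Proof.
by move=> [fD fM fZ f1] [hD hM hZ h1]; split=> [a b|a b|c a|] /=;
  rewrite ?fD ?hD ?fM ?hM ?fZ ?hZ ?f1 ?h1.
Qed.

Lemma subalg_val_alg_hom (A : algType CC) (S : subalgClosed A) :
  is_alg_hom (val : subalg S -> A).
Proof. by split=> [a b|a b|c a|]; rewrite ?rmorphD ?rmorphM ?linearZ ?rmorph1. Qed.

Section LocalizedWeylClifford.
Variables (n : nat) (eta : 'M[CC]_n) (A : algType CC) (x d g : 'I_n -> A).
Hypothesis loc : is_localized_W eta x d g.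

Section Induction.
Variable S : subalgClosed A.
Hypotheses (xS : forall i, x i \in S) (dS : forall i, d i \in S) (gS : forall i, g i \in S).
Hypothesis invS : forall (k : int) y, (Hop x d + k%:~R) * y = 1 -> y \in S.

Let xs i : subalg S := Subalg (xS i).
Let ds i : subalg S := Subalg (dS i).
Let gs i : subalg S := Subalg (gS i).

Lemma W_relations_subalg : W_relations eta xs ds gs.
Proof.
have [[xx dd dx gxd gg] _ _] := loc.
split=> i j; do ?split; apply: val_inj;
  rewrite ?rmorphB ?rmorphD ?rmorphM ?rmorph_nat ?linearZ ?rmorph1 //=;
  by case: (gxd i j).
Qed.

Lemma D_invertible_subalg : D_invertible xs ds.
Proof.
have [_ D _] := loc; move=> k; have [y [yH Hy]] := D k.
have [vD vM _ v1] := subalg_val_alg_hom S.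
by exists (Subalg (invS Hy)); split; apply: val_inj;
  rewrite vM vD (alg_hom_Hop _ _ (subalg_val_alg_hom S)) rmorph_int v1.
Qed.

Lemma localized_W_induction a : a \in S.
Proof.
have [W D U] := loc.
have [[f [f_hom f_gens]] _] := U _ _ _ _ W_relations_subalg D_invertible_subalg.
have [_ hom_uniq] := U _ _ _ _ W D.
have id_hom : is_alg_hom (@id A) by [].
have gens i : [/\ x i = val (f (x i)), d i = val (f (d i)) & g i = val (f (g i))].
  by case: (f_gens i) => -> -> ->.
have -> : a = val (f a).
  exact: (hom_uniq _ _ id_hom (alg_hom_comp f_hom (subalg_val_alg_hom S)) gens).
exact: subalg_valP.
Qed.

End Induction.

Lemma localized_W_absorbs_powers : eta^T = eta -> forall a, absorbs_powers (Eop eta d) a.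
Proof.
move=> eta_sym a; have [W D _] := loc.
apply/absorbs_powersP/localized_W_induction => [i|i|i|k y].
- exact/absorbs_powersP/(absorbs_powers_shift (Eop_x W eta_sym i))/(Eop_d_up W).
- exact/absorbs_powersP/absorbs_powers_comm/(d_Eop W).
- exact/absorbs_powersP/absorbs_powers_comm/(g_Eop W).
- by move=> Hy; apply/absorbs_powersP/(absorbs_powers_inv (Eop_Hop W eta_sym) D Hy).
Qed.

End LocalizedWeylClifford.

Theorem proposition3p4 (n : nat) (eta : 'M[CC]_n) (A' : algType CC)
    (x d g : 'I_n -> A') :
  (1 <= n)%N ->
  eta^T = eta ->
  eta \in unitmx ->
  is_localized_W eta x d g ->
  locally_finite_quotient (Xop g d) (Eop eta d).
Proof.
move=> _ eta_sym _ loc; have [W _ _] := loc.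
apply: (Enilpotent_locally_finite_quotient (Xop_sqr W)) => a.
exact: (localized_W_absorbs_powers loc eta_sym a 1).
Qed.
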